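(* For $N\ge 5$, let $\mathrm{Cir}^4_N$ be the graph on vertices $1,\dots,N$ arranged in a cycle, in which each vertex is adjacent to the 2 nearest vertices clockwise and the 2 nearest counter-clockwise, and let $\mathrm{Cir}^2_N$ be the cycle graph on the same vertices in the same cyclic order. Then \[ 0.138<\liminf_{N\to\infty}\rho(\mathrm{Cir}^4_N,\mathrm{Cir}^2_N)\le\limsup_{N\to\infty}\rho(\mathrm{Cir}^4_N,\mathrm{Cir}^2_N)<0.34. \]
   Context: Moran Birth-death process on two graphs (neutral case): $G^A$ and $G^B$ are connected undirected simple graphs on the same vertex set $\{1,\dots,N\}$. Every vertex is occupied by exactly one individual, of type $A$ (mutant) or type $B$ (resident). In each discrete time step, one individual is chosen uniformly at random among all $N$ individuals to reproduce; its offspring (of the same type) replaces the individual at a vertex chosen uniformly at random among the neighbors of the parent's vertex, where neighbors are taken in $G^A$ if the parent is of type $A$ and in $G^B$ if the parent is of type $B$. The all-$A$ and all-$B$ states are absorbing. The fixation probability $\rho(G^A,G^B)$ is the probability that the process reaches the all-$A$ state when started from exactly one type-$A$ individual at a uniformly random vertex, all other vertices of type $B$. *)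

From HB Require Import structures.
From mathcomp Require Import all_boot all_order all_algebra.
From mathcomp Require Import all_classical all_reals all_analysis.
Set Implicit Arguments. Unset Strict Implicit. Unset Printing Implicit Defensive.
Import Order.TTheory GRing.Theory Num.Theory.
Import numFieldNormedType.Exports.
Local Open Scope ring_scope.

(* A configuration: true = type A (mutant) at vertex v, false = type B. *)
Definition config (N : nat) := {ffun 'I_N -> bool}.

Definition deg (N : nat) (e : rel 'I_N) (u : 'I_N) : nat := #|[set v | e u v]|.

Definition upd (N : nat) (s : config N) (v : 'I_N) (b : bool) : config N :=
  [ffun w => if w == v then b else s w].

Definition allA (N : nat) : config N := [ffun => true].

Definition single (N : nat) (v : 'I_N) : config N := [ffun w => w == v].

(* One step of the backward (Kolmogorov) equation of the Moran Birth-death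
   chain on two graphs GA (used by type-A parents) and GB (type-B parents):
   (step h) s = E_s[ h(X_1) ]. *)
Definition step (R : realType) (N : nat) (GA GB : rel 'I_N)
    (h : config N -> R) (s : config N) : R :=
  \sum_(u : 'I_N)
    \sum_(v : 'I_N | (if s u then GA else GB) u v)
      (N%:R^-1 * (deg (if s u then GA else GB) u)%:R^-1) * h (upd s v (s u)).

Fixpoint hitA (R : realType) (N : nat) (GA GB : rel 'I_N) (t : nat)
    (s : config N) : R :=
  match t with
  | 0 => if s == allA N then 1 else 0
  | t'.+1 => step GA GB (@hitA R N GA GB t') s
  end.

(* Since all-A is absorbing,
   this is the limit as t -> oo of P(X_t = all-A). *)
Definition rho (R : realType) (N : nat) (GA GB : rel 'I_N) : R :=
  limn (fun t => N%:R^-1 * \sum_(v : 'I_N) @hitA R N GA GB t (single v)).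

Definition cyc_step (N : nat) (i j : 'I_N) (k : nat) : bool :=
  (j == (i + k) %% N :> nat)%N || (i == (j + k) %% N :> nat)%N.

Definition Cir4 (N : nat) : rel 'I_N :=
  fun i j => (i != j) && (cyc_step i j 1 || cyc_step i j 2).

Definition Cir2 (N : nat) : rel 'I_N :=
  fun i j => (i != j) && cyc_step i j 1.

(* Both bounds come from product potentials
     Phi g s = \prod_i g (s i) (s (i + 1)) (s (i + 2))
   over the windows of three consecutive vertices of the cycle.  Changing the
   type of one vertex multiplies Phi g by a factor that only depends on the
   five vertices around it, so (P (Phi g) s - Phi g s) / Phi g s is an average
   of window functions.  Adding a gauge h(window) - h(shifted window), which
   telescopes around the cycle, makes the sign of the drift checkable window by
   window, i.e. in 32 cases.
   For g = gU, Phi g s = (2/3)^(number of A's) and 1 - Phi g is superharmonic;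
   it equals 1/3 at a single mutant and 1 - (2/3)^N at all-A, which gives
   rho <= (1/3) / (1 - (2/3)^N).
   For g = gL, 1 - Phi g is subharmonic and vanishes at all-B, so from a single
   mutant the chain avoids all-B with probability at least
   1 - Phi g (single v) > 0.141.  As all-B is reached from any non-absorbed
   state within N steps with probability at least (2N)^-N, the chain gets
   absorbed, and this is a lower bound for rho. *)

From HB Require Import structures.
From mathcomp Require Import all_boot all_order all_algebra.
From mathcomp Require Import all_classical all_reals all_analysis.
From mathcomp Require Import ring lra zify.
Set Implicit Arguments. Unset Strict Implicit. Unset Printing Implicit Defensive.
Import Order.TTheory GRing.Theory Num.Theory.
Import numFieldNormedType.Exports.
Local Open Scope ring_scope.

Lemma le_of_geometric_gap (R : realType) (x y a : R) :
  0 <= a < 1 -> (forall j, x - a ^+ j <= y) -> x <= y.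
Proof.
move=> /andP[a_ge0 a_lt1] gap.
have gap_cvg : ((fun j => x - a ^+ j) @ \oo --> x)%classic.
  rewrite -[x in (_ --> x)%classic]subr0; apply: cvgB; first exact: cvg_cst.
  by apply: cvg_expr; rewrite ger0_norm.
rewrite -(cvg_lim _ gap_cvg) //; apply: limr_le; first exact: cvgP gap_cvg.
exact: nearW.
Qed.

Lemma limn_einf_ge (R : realType) (u : (\bar R)^nat) (a : \bar R) :
  (\forall k \near \oo, a <= u k)%classic%E -> (a <= limn_einf u)%E.
Proof.
move=> [k0 _ a_le]; rewrite limn_einf_lim; apply: lime_ge; first exact: is_cvg_einfs.
exists k0 => // m /= m_ge; apply/ereal_infP => _ [k /= k_ge <-]; apply: a_le.
exact: leq_trans k_ge.
Qed.

Lemma limn_esup_le (R : realType) (u : (\bar R)^nat) (a : \bar R) :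
  (\forall k \near \oo, u k <= a)%classic%E -> (limn_esup u <= a)%E.
Proof.
move=> [k0 _ le_a]; rewrite limn_esup_lim; apply: lime_le; first exact: is_cvg_esups.
exists k0 => // m /= m_ge; apply/ereal_supP => _ [k /= k_ge <-]; apply: le_a.
exact: leq_trans k_ge.
Qed.

Section MoranChain.
Variables (R : realType) (N : nat) (GA GB : rel 'I_N).
Local Notation cfg := (config N).
Local Notation P := (@step R N GA GB).
Local Notation hit := (@hitA R N GA GB).

Definition allB : cfg := [ffun => false].

Definition indB (s : cfg) : R := if s == allB then 1 else 0.

Lemma step_le (f g : cfg -> R) : (forall s, f s <= g s) -> forall s, P f s <= P g s.
Proof.
move=> fg s; apply: ler_sum => u _; apply: ler_sum => v _.
by apply: ler_wpM2l; rewrite ?mulr_ge0 ?invr_ge0 ?ler0n.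
Qed.

Lemma step_lin (a b : R) (f g : cfg -> R) s :
  P (fun x => a * f x + b * g x) s = a * P f s + b * P g s.
Proof.
rewrite /step !mulr_sumr -big_split; apply: eq_bigr => u _ /=.
by rewrite !mulr_sumr -big_split; apply: eq_bigr => v _ /=; ring.
Qed.

Lemma step_ge_term (h : cfg -> R) (s : cfg) u v : (forall x, 0 <= h x) ->
  (if s u then GA else GB) u v ->
  N%:R^-1 * (deg (if s u then GA else GB) u)%:R^-1 * h (upd s v (s u)) <= P h s.
Proof.
move=> h_ge0 uv; have term_ge0 (w : 'I_N) : 0 <= N%:R^-1 * (deg (if s w then GA else GB) w)%:R^-1.
  by rewrite mulr_ge0 ?invr_ge0 ?ler0n.
rewrite /step (bigD1 u) //= (bigD1 v) //= -addrA lerDl.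
by rewrite addr_ge0 ?sumr_ge0 // => w _; rewrite ?sumr_ge0 // => *; rewrite mulr_ge0.
Qed.

Lemma iter_step_le t (f g : cfg -> R) :
  (forall s, f s <= g s) -> forall s, iter t P f s <= iter t P g s.
Proof. by move=> fg; elim: t => //= t IH s; apply: step_le. Qed.

Lemma iter_step_lin t (a b : R) (f g : cfg -> R) s :
  iter t P (fun x => a * f x + b * g x) s = a * iter t P f s + b * iter t P g s.
Proof.
elim: t s => //= t IH s; rewrite -step_lin.
by congr (P _ s); apply/funext => x; apply: IH.
Qed.

Lemma iter_stepZ t (a : R) (f : cfg -> R) s : iter t P (fun x => a * f x) s = a * iter t P f s.
Proof.
have -> : (fun x => a * f x) = (fun x => a * f x + 0 * f x) by apply/funext => x; ring.
by rewrite iter_step_lin mul0r addr0.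
Qed.

Lemma iter_step_ge0 t (f : cfg -> R) : (forall s, 0 <= f s) -> forall s, 0 <= iter t P f s.
Proof.
move=> f_ge0; elim: t => //= t IH s.
by do 2![apply: sumr_ge0 => ? _]; rewrite mulr_ge0 ?mulr_ge0 ?invr_ge0 ?ler0n.
Qed.

Lemma iter_superharmonic (f : cfg -> R) :
  (forall s, P f s <= f s) -> forall t s, iter t P f s <= f s.
Proof.
move=> sup; elim=> //= t IH s; apply: le_trans (sup s); exact: step_le.
Qed.

Lemma iter_subharmonic (f : cfg -> R) :
  (forall s, f s <= P f s) -> forall t s, f s <= iter t P f s.
Proof.
move=> sub; elim=> //= t IH s; apply: le_trans (sub s) _; exact: step_le.
Qed.

Lemma hitA_iter t : hit t = iter t P (hit 0).
Proof. by elim: t => //= t ->. Qed.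

Lemma hitA_ge0 t s : 0 <= hit t s.
Proof. by rewrite hitA_iter; apply: iter_step_ge0 => x /=; case: eqP. Qed.

Lemma hitA_le_superharmonic (f : cfg -> R) t s :
  (forall x, 0 <= f x) -> (forall x, P f x <= f x) -> f (allA N) * hit t s <= f s.
Proof.
move=> f_ge0 sup; rewrite hitA_iter -iter_stepZ.
apply: le_trans (iter_superharmonic sup t s); apply: iter_step_le => x /=.
by case: eqP => [->|_]; rewrite ?mulr1 ?mulr0.
Qed.

Hypothesis N_gt0 : (0 < N)%N.
Hypothesis GA_deg_gt0 : forall u, (0 < deg GA u)%N.
Hypothesis GB_deg_gt0 : forall u, (0 < deg GB u)%N.

Lemma natr_N_neq0 : N%:R != 0 :> R.
Proof. by rewrite pnatr_eq0 -lt0n. Qed.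

Lemma mean_cst (c : R) : N%:R^-1 * \sum_(u : 'I_N) c = c.
Proof.
have N_neq0 := natr_N_neq0.
by rewrite sumr_const card_ord -mulr_natr; field.
Qed.

Lemma step_cst (c : R) s : P (fun _ => c) s = c.
Proof.
have inner u : \sum_(v | (if s u then GA else GB) u v)
    N%:R^-1 * (deg (if s u then GA else GB) u)%:R^-1 * c = N%:R^-1 * c.
  have d_neq0 : (deg (if s u then GA else GB) u)%:R != 0 :> R.
    by rewrite pnatr_eq0 -lt0n; case: (s u).
  by rewrite sumr_const -cardsE -/(deg _ u) -[LHS]mulr_natr; field; rewrite natr_N_neq0.
by rewrite /step (eq_bigr _ (fun u _ => inner u)) -mulr_sumr mean_cst.
Qed.

Lemma step_1B (f : cfg -> R) s : P (fun x => 1 - f x) s = 1 - P f s.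
Proof.
have -> : (fun x => 1 - f x) = (fun x => 1 * (fun _ => 1) x + (-1) * f x).
  by apply/funext => x /=; ring.
by rewrite step_lin step_cst; ring.
Qed.

Lemma step_monochrome (b : bool) (h : cfg -> R) : P h [ffun => b] = h [ffun => b].
Proof.
rewrite -[RHS](step_cst _ [ffun => b]); apply: eq_bigr => u _; apply: eq_bigr => v _.
by congr (_ * h _); apply/ffunP => w; rewrite !ffunE; case: ifP.
Qed.

Lemma iter_step_cst t (c : R) s : iter t P (fun _ => c) s = c.
Proof.
elim: t s => //= t IH s; rewrite -[RHS](step_cst c s).
by congr (P _ s); apply/funext => x; apply: IH.
Qed.

Lemma iter_step_1B t (f : cfg -> R) s : iter t P (fun x => 1 - f x) s = 1 - iter t P f s.
Proof.
have -> : (fun x => 1 - f x) = (fun x => 1 * (fun _ => 1) x + (-1) * f x).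
  by apply/funext => x /=; ring.
by rewrite iter_step_lin iter_step_cst; ring.
Qed.

Lemma iter_step_monochrome t (b : bool) (h : cfg -> R) :
  iter t P h [ffun => b] = h [ffun => b].
Proof. by elim: t => //= t IH; rewrite step_monochrome. Qed.

Lemma hitA_le1 t s : hit t s <= 1.
Proof.
by rewrite hitA_iter -(iter_step_cst t 1 s); apply: iter_step_le => x /=; case: eqP.
Qed.

Lemma hitA_nondecreasing t s : hit t s <= hit t.+1 s.
Proof.
rewrite [hit t]hitA_iter [hit t.+1]hitA_iter iterSr; apply: iter_step_le => x /=.
case: (eqVneq x (allA N)) => [->|_]; last exact: (hitA_ge0 1 x).
by rewrite (step_monochrome true) -/(allA N) eqxx.
Qed.

Lemma allA_neq_allB : allA N != allB.
Proof. by apply/eqP => /ffunP /(_ (Ordinal N_gt0)); rewrite !ffunE. Qed.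

Definition unabsorbed (s : cfg) : R := 1 - hit 0 s - indB s.

Lemma unabsorbed01 s : 0 <= unabsorbed s <= 1.
Proof.
rewrite /unabsorbed /indB /=; case: (eqVneq s (allA N)) => [->|_].
  by rewrite (negbTE allA_neq_allB); lra.
by case: (s == allB); lra.
Qed.

Lemma unabsorbed_allA : unabsorbed (allA N) = 0.
Proof. by rewrite /unabsorbed /indB /= eqxx (negbTE allA_neq_allB); ring. Qed.

Lemma unabsorbed_allB : unabsorbed allB = 0.
Proof. by rewrite /unabsorbed /indB /= eqxx eq_sym (negbTE allA_neq_allB); ring. Qed.

Lemma iter_unabsorbed t s : iter t P unabsorbed s = 1 - hit t s - iter t P indB s.
Proof.
have -> : unabsorbed = (fun x => 1 * (fun y => 1 - hit 0 y) x + (-1) * indB x).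
  by apply/funext => x; rewrite /unabsorbed; ring.
by rewrite iter_step_lin iter_step_1B -hitA_iter; ring.
Qed.

Section Absorption.
Variables (m : nat) (c : R).
Hypothesis c_le1 : c <= 1.
Hypothesis absorbB : forall s, s != allA N -> s != allB -> c <= iter m P indB s.

Lemma unabsorbed_step s : iter m P unabsorbed s <= (1 - c) * unabsorbed s.
Proof.
have [->|sA] := eqVneq s (allA N).
  by rewrite (iter_step_monochrome _ true) -/(allA N) unabsorbed_allA mulr0.
have [->|sB] := eqVneq s allB.
  by rewrite (iter_step_monochrome _ false) -/allB unabsorbed_allB mulr0.
rewrite iter_unabsorbed /unabsorbed /indB /= (negbTE sA) (negbTE sB).
by have := absorbB sA sB; have := hitA_ge0 m s; lra.
Qed.

Lemma unabsorbed_decay j s : iter (j * m) P unabsorbed s <= (1 - c) ^+ j.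
Proof.
have c'_ge0 : 0 <= 1 - c by rewrite subr_ge0.
suff : iter (j * m) P unabsorbed s <= (1 - c) ^+ j * unabsorbed s.
  move=> decay; apply: le_trans decay _.
  by rewrite ler_piMr ?exprn_ge0 //; case/andP: (unabsorbed01 s).
elim: j s => [|j IH] s; first by rewrite mul0n mul1r.
rewrite mulSn iterD.
apply: le_trans (iter_step_le m IH s) _.
by rewrite iter_stepZ exprSr -mulrA ler_wpM2l ?exprn_ge0 ?unabsorbed_step.
Qed.

Lemma hitA_ge_subharmonic (f : cfg -> R) j s :
  (forall x, f x <= P f x) -> (forall x, f x <= 1 - indB x) ->
  f s - (1 - c) ^+ j <= hit (j * m) s.
Proof.
move=> sub f_le.
have f_bound : f s <= 1 - iter (j * m) P indB s.
  rewrite -iter_step_1B; apply: le_trans (iter_subharmonic sub _ s) _.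
  exact: iter_step_le.
have := unabsorbed_decay j s; rewrite iter_unabsorbed; lra.
Qed.
End Absorption.

Lemma mean_le (F : 'I_N -> R) c : (forall v, F v <= c) -> N%:R^-1 * \sum_v F v <= c.
Proof.
move=> F_le; rewrite -[leRHS](mean_cst c) ler_wpM2l ?invr_ge0 ?ler0n //.
exact: ler_sum.
Qed.

Lemma mean_ge (F : 'I_N -> R) c : (forall v, c <= F v) -> c <= N%:R^-1 * \sum_v F v.
Proof.
move=> F_ge; rewrite -[leLHS](mean_cst c) ler_wpM2l ?invr_ge0 ?ler0n //.
exact: ler_sum.
Qed.

Definition mean_hitA (t : nat) : R := N%:R^-1 * \sum_(v : 'I_N) hit t (single v).

Lemma mean_hitA_nondecreasing : nondecreasing_seq mean_hitA.
Proof.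
apply/nondecreasing_seqP => t; rewrite ler_wpM2l ?invr_ge0 ?ler0n //.
by apply: ler_sum => v _; apply: hitA_nondecreasing.
Qed.

Lemma mean_hitA_cvg : cvgn mean_hitA.
Proof.
apply: nondecreasing_is_cvgn; first exact: mean_hitA_nondecreasing.
by exists 1 => _ [t _ <-]; apply: mean_le => v; apply: hitA_le1.
Qed.

Lemma rho_le c : (forall t v, hit t (single v) <= c) -> @rho R N GA GB <= c.
Proof.
move=> hit_le; apply: limr_le; first exact: mean_hitA_cvg.
by apply: nearW => t; apply: mean_le.
Qed.

Lemma le_rho t c : (forall v, c <= hit t (single v)) -> c <= @rho R N GA GB.
Proof.
move=> hit_ge; apply: le_trans (nondecreasing_cvgn_le mean_hitA_nondecreasing mean_hitA_cvg t).
exact: mean_ge.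
Qed.
End MoranChain.

Section Circulant.
Variable n : nat.
Local Notation N := n.+3.+2.
Local Notation T := 'I_N.

Lemma val_addn (u : T) k : val (u + k%:R) = ((u + k) %% N)%N.
Proof. by rewrite /= Zp_nat /= modnDmr. Qed.

Lemma natr_Zp_neq0 k : (0 < k < N)%N -> (k%:R : T) != 0.
Proof.
move=> /andP[k_gt0 k_lt]; apply/eqP => /(congr1 val).
by rewrite Zp_nat /= modn_small // => k0; rewrite k0 in k_gt0.
Qed.

Lemma cyc_stepE (u v : T) k : (0 < k < N)%N ->
  cyc_step u v k = (v == u + k%:R) || (v == u - k%:R).
Proof.
move=> k_range; rewrite /cyc_step -!val_addn !val_eqE; congr (_ || _).
by rewrite [in RHS]eq_sym subr_eq.
Qed.

Lemma neq_shift (a b : T) k : (0 < k < N)%N ->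
  a - b = k%:R \/ a - b = - k%:R -> a != b.
Proof.
move=> k_range ab_k; apply/eqP => ab; move: ab_k; rewrite ab subrr.
by case=> /eqP; rewrite eq_sym ?oppr_eq0 (negbTE (natr_Zp_neq0 k_range)).
Qed.

Definition nbr4 (u : T) := [:: u + 1; u - 1; u + 2%:R; u - 2%:R].
Definition nbr2 (u : T) := [:: u + 1; u - 1].

Lemma uniq_nbr4 u : uniq (nbr4 u).
Proof.
rewrite /= !inE !negb_or !andbT.
have e12 : u + 1 != u - 1 by apply: (@neq_shift _ _ 2) => //; left; ring.
have e13 : u + 1 != u + 2%:R by apply: (@neq_shift _ _ 1) => //; right; ring.
have e14 : u + 1 != u - 2%:R by apply: (@neq_shift _ _ 3) => //; left; ring.
have e23 : u - 1 != u + 2%:R by apply: (@neq_shift _ _ 3) => //; right; ring.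
have e24 : u - 1 != u - 2%:R by apply: (@neq_shift _ _ 1) => //; left; ring.
have e34 : u + 2%:R != u - 2%:R by apply: (@neq_shift _ _ 4) => //; left; ring.
by rewrite e12 e13 e14 e23 e24 e34.
Qed.

Lemma uniq_nbr2 u : uniq (nbr2 u).
Proof. by rewrite /= !inE andbT; apply: (@neq_shift _ _ 2) => //; left; ring. Qed.

Lemma notin_nbr4 u : u \notin nbr4 u.
Proof.
rewrite !inE !negb_or; apply/and4P; split.
- by apply: (@neq_shift _ _ 1) => //; right; ring.
- by apply: (@neq_shift _ _ 1) => //; left; ring.
- by apply: (@neq_shift _ _ 2) => //; right; ring.
- by apply: (@neq_shift _ _ 2) => //; left; ring.
Qed.

Lemma Cir4E (u v : T) : Cir4 u v = (v \in nbr4 u).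
Proof.
rewrite /Cir4 !cyc_stepE // !inE -!orbA.
by have [<-|_] //= := eqVneq u v; apply/esym/negbTE; have := notin_nbr4 u; rewrite !inE.
Qed.

Lemma Cir2E (u v : T) : Cir2 u v = (v \in nbr2 u).
Proof.
rewrite /Cir2 cyc_stepE // !inE.
have [<-|_] //= := eqVneq u v; have := notin_nbr4 u.
by rewrite !inE !negb_or => /and4P[/negbTE -> /negbTE ->].
Qed.

Lemma deg_Cir4 u : deg (@Cir4 N) u = 4%N.
Proof.
rewrite /deg -[4%N]/(size (nbr4 u)) -(card_uniqP (uniq_nbr4 u)).
by apply: eq_card => v; rewrite inE Cir4E.
Qed.

Lemma deg_Cir2 u : deg (@Cir2 N) u = 2%N.
Proof.
rewrite /deg -[2%N]/(size (nbr2 u)) -(card_uniqP (uniq_nbr2 u)).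
by apply: eq_card => v; rewrite inE Cir2E.
Qed.

Lemma deg_Cir4_gt0 u : (0 < deg (@Cir4 N) u)%N. Proof. by rewrite deg_Cir4. Qed.
Lemma deg_Cir2_gt0 u : (0 < deg (@Cir2 N) u)%N. Proof. by rewrite deg_Cir2. Qed.

Lemma sum_Cir4 (R : realType) u (F : T -> R) : \sum_(v | Cir4 u v) F v =
  F (u + 1) + F (u - 1) + F (u + 2%:R) + F (u - 2%:R).
Proof.
rewrite (eq_bigl (mem (nbr4 u))); last by move=> v; rewrite Cir4E.
by rewrite -big_uniq ?uniq_nbr4 // !big_cons big_nil /= addr0 !addrA.
Qed.

Lemma sum_Cir2 (R : realType) u (F : T -> R) : \sum_(v | Cir2 u v) F v =
  F (u + 1) + F (u - 1).
Proof.
rewrite (eq_bigl (mem (nbr2 u))); last by move=> v; rewrite Cir2E.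
by rewrite -big_uniq ?uniq_nbr2 // !big_cons big_nil /= addr0.
Qed.
End Circulant.

Section ProductPotential.
Variables (R : realType) (n : nat).
Local Notation N := n.+3.+2.
Local Notation T := 'I_N.
Local Notation cfg := (config N).
Local Notation P := (@step R N (@Cir4 N) (@Cir2 N)).

Definition circ_term (h : cfg -> R) (s : cfg) (u : T) : R :=
  if s u then 4%:R^-1 * (h (upd s (u + 1) true) + h (upd s (u - 1) true)
                        + h (upd s (u + 2%:R) true) + h (upd s (u - 2%:R) true))
  else 2%:R^-1 * (h (upd s (u + 1) false) + h (upd s (u - 1) false)).

Lemma circ_stepE (h : cfg -> R) s : P h s = N%:R^-1 * \sum_u circ_term h s u.
Proof.
rewrite /step mulr_sumr; apply: eq_bigr => u _; rewrite /circ_term.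
by case: (s u); rewrite ?sum_Cir4 ?deg_Cir4 ?sum_Cir2 ?deg_Cir2; ring.
Qed.

Definition Phi (g : bool -> bool -> bool -> R) (s : cfg) : R :=
  \prod_(i : T) g (s i) (s (i + 1)) (s (i + 2%:R)).

Definition Phi_ratio (g : bool -> bool -> bool -> R) a b c d e c' : R :=
  g a b c' / g a b c * (g b c' d / g b c d) * (g c' d e / g c d e).

Variable g : bool -> bool -> bool -> R.
Hypothesis g_gt0 : forall a b c, 0 < g a b c.

Lemma g_neq0 a b c : g a b c != 0. Proof. by rewrite gt_eqF. Qed.

Lemma Phi_ge0 s : 0 <= Phi g s.
Proof. by apply: prodr_ge0 => i _; apply: ltW. Qed.

Lemma Phi_upd (s : cfg) v c' : Phi g (upd s v c') =
  Phi g s * Phi_ratio g (s (v - 2%:R)) (s (v - 1)) (s v) (s (v + 1)) (s (v + 2%:R)) c'.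
Proof.
have d21 : v - 1 != v - 2%:R by apply: (@neq_shift _ _ _ 1) => //; left; ring.
have d20 : v != v - 2%:R by apply: (@neq_shift _ _ _ 2) => //; left; ring.
have d10 : v != v - 1 by apply: (@neq_shift _ _ _ 1) => //; left; ring.
have d01 : (v + 1 == v) = false.
  by apply/negbTE; rewrite eq_sym; apply: (@neq_shift _ _ _ 1) => //; right; ring.
have d02 : (v + 2%:R == v) = false.
  by apply/negbTE; rewrite eq_sym; apply: (@neq_shift _ _ _ 2) => //; right; ring.
rewrite /Phi (bigD1 (v - 2%:R)) // [in RHS](bigD1 (v - 2%:R)) //=.
rewrite (bigD1 (v - 1)) ?d21 // [in RHS](bigD1 (v - 1)) ?d21 //=.
rewrite (bigD1 v) ?d20 ?d10 // [in RHS](bigD1 v) ?d20 ?d10 //=.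
set far := (fun i => (i != v - 2%:R) && (i != v - 1) && (i != v)).
have -> : \prod_(i | far i) g (upd s v c' i) (upd s v c' (i + 1)) (upd s v c' (i + 2%:R)) =
          \prod_(i | far i) g (s i) (s (i + 1)) (s (i + 2%:R)).
  apply: eq_bigr => i /andP[/andP[i2 i1] i0]; rewrite !ffunE (negbTE i0).
  have -> : (i + 1 == v) = false by apply/negbTE; apply: contra i1 => /eqP <-; rewrite addrK.
  by have -> : (i + 2%:R == v) = false by apply/negbTE; apply: contra i2 => /eqP <-; rewrite addrK.
have -> : v - 2%:R + 1 = v - 1 by ring.
have -> : v - 2%:R + 2%:R = v by ring.
have -> : v - 1 + 1 = v by ring.
have -> : v - 1 + 2%:R = v + 1 by ring.
rewrite !ffunE eqxx d01 d02 [v - 2%:R == v]eq_sym (negbTE d20) [v - 1 == v]eq_sym (negbTE d10).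
by rewrite /Phi_ratio; field; rewrite !g_neq0.
Qed.

Definition b2r (b : bool) : R := (nat_of_bool b)%:R.

(* N times the relative drift caused at the middle vertex c of a window: c is
   replaced by an A offspring at rate 1/4 per A vertex at distance <= 2, and by
   a B offspring at rate 1/2 per adjacent B vertex. *)
Definition local_drift a b c d e : R :=
  4%:R^-1 * (b2r a + b2r b + b2r d + b2r e) * (Phi_ratio g a b c d e true - 1)
  + 2%:R^-1 * (b2r (~~ b) + b2r (~~ d)) * (Phi_ratio g a b c d e false - 1).

Lemma sum_shift (F : T -> T -> R) (d : T) :
  \sum_(u : T) F u (u + d) = \sum_(v : T) F (v - d) v.
Proof. by rewrite [RHS](reindex_inj (addIr d)); apply: eq_bigr => u _; rewrite addrK. Qed.

Lemma sum_window_telescope (h : bool -> bool -> bool -> bool -> R) (s : cfg) :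
  \sum_(v : T) (h (s (v - 2%:R)) (s (v - 1)) (s v) (s (v + 1))
              - h (s (v - 1)) (s v) (s (v + 1)) (s (v + 2%:R))) = 0.
Proof.
apply/eqP; rewrite sumrB subr_eq0; apply/eqP.
rewrite (reindex_inj (addIr 1)) /=; apply: eq_bigr => v _.
have -> : v + 1 - 2%:R = v - 1 by ring.
have -> : v + 1 + 1 = v + 2%:R by ring.
by rewrite addrK.
Qed.

Lemma Phi_drift (h : bool -> bool -> bool -> bool -> R) s :
  P (Phi g) s - Phi g s = Phi g s * (N%:R^-1 * \sum_(v : T)
    (local_drift (s (v - 2%:R)) (s (v - 1)) (s v) (s (v + 1)) (s (v + 2%:R))
     + (h (s (v - 2%:R)) (s (v - 1)) (s v) (s (v + 1))
        - h (s (v - 1)) (s v) (s (v + 1)) (s (v + 2%:R))))).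
Proof.
rewrite big_split /= (sum_window_telescope h s) addr0.
pose r (v : T) c' :=
  Phi_ratio g (s (v - 2%:R)) (s (v - 1)) (s v) (s (v + 1)) (s (v + 2%:R)) c' - 1.
pose A (u v : T) := b2r (s u) * 4%:R^-1 * r v true.
pose B (u v : T) := b2r (~~ s u) * 2%:R^-1 * r v false.
have term u : circ_term (Phi g) s u = Phi g s * (1 + (A u (u + 1) + A u (u - 1)
    + A u (u + 2%:R) + A u (u - 2%:R) + B u (u + 1) + B u (u - 1))).
  rewrite /circ_term /A /B /r !Phi_upd /b2r; by case: (s u) => /=; field.
have -> : \sum_(v : T) local_drift (s (v - 2%:R)) (s (v - 1)) (s v) (s (v + 1)) (s (v + 2%:R))
  = \sum_(u : T) (A u (u + 1) + A u (u - 1) + A u (u + 2%:R) + A u (u - 2%:R)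
                 + B u (u + 1) + B u (u - 1)).
  rewrite !big_split /= !(sum_shift A) !(sum_shift B) -!big_split /=.
  by apply: eq_bigr => v _; rewrite !opprK /local_drift /A /B /r; ring.
have N_neq0 : N%:R != 0 :> R by rewrite pnatr_eq0.
rewrite circ_stepE (eq_bigr _ (fun u _ => term u)) -mulr_sumr big_split /=.
by rewrite sumr_const card_ord -[_ *+ N]mulr_natl mulr1; field.
Qed.

Lemma Phi_subharmonic (h : bool -> bool -> bool -> bool -> R) :
  (forall a b c d e, 0 <= local_drift a b c d e + h a b c d - h b c d e) ->
  forall s, Phi g s <= P (Phi g) s.
Proof.
move=> drift_ge0 s; rewrite -subr_ge0 (Phi_drift h).
rewrite !mulr_ge0 ?Phi_ge0 ?invr_ge0 ?ler0n ?sumr_ge0 // => v _.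
by rewrite addrA.
Qed.

Lemma Phi_superharmonic (h : bool -> bool -> bool -> bool -> R) :
  (forall a b c d e, local_drift a b c d e + h a b c d - h b c d e <= 0) ->
  forall s, P (Phi g) s <= Phi g s.
Proof.
move=> drift_le0 s; rewrite -subr_le0 (Phi_drift h).
rewrite mulr_ge0_le0 ?Phi_ge0 // mulr_ge0_le0 ?invr_ge0 ?ler0n ?sumr_le0 // => v _.
by rewrite addrA.
Qed.
End ProductPotential.

Section Certificates.
Variable R : realType.

Definition gL (a b c : bool) : R :=
  match a, b, c with
  | false, false, false => 1
  | false, false, true => 471%:R / 500%:R
  | false, true, false => 121%:R / 125%:R
  | false, true, true => 873%:R / 1000%:R
  | true, false, false => 471%:R / 500%:R
  | true, false, true => 897%:R / 1000%:R
  | true, true, false => 873%:R / 1000%:R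
  | true, true, true => 197%:R / 250%:R
  end.

Definition hL (a b c d : bool) : R :=
  match a, b, c, d with
  | false, false, false, false => 0
  | false, false, false, true => - (113%:R / 4000%:R)
  | false, false, true, false => - (81%:R / 1000%:R)
  | false, false, true, true => - (533%:R / 4000%:R)
  | false, true, false, false => 67%:R / 800%:R
  | false, true, false, true => 57%:R / 800%:R
  | false, true, true, false => 9%:R / 4000%:R
  | false, true, true, true => 7%:R / 4000%:R
  | true, false, false, false => 13%:R / 400%:R
  | true, false, false, true => - (57%:R / 4000%:R)
  | true, false, true, false => - (71%:R / 1000%:R)
  | true, false, true, true => - (533%:R / 4000%:R)
  | true, true, false, false => 69%:R / 500%:R
  | true, true, false, true => 131%:R / 1000%:R
  | true, true, true, false => 11%:R / 4000%:R
  | true, true, true, true => 9%:R / 4000%:R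
  end.

Definition gU (a b c : bool) : R := if a then 2%:R / 3%:R else 1.

Definition hU (a b c d : bool) : R :=
  match a, b, c, d with
  | false, false, false, false => - (1%:R / 4%:R)
  | false, false, false, true => - (1%:R / 3%:R)
  | false, false, true, false => - (5%:R / 12%:R)
  | false, false, true, true => - (1%:R / 2%:R)
  | false, true, false, _ => 0
  | false, true, true, _ => - (1%:R / 4%:R)
  | true, false, false, false => - (1%:R / 6%:R)
  | true, false, false, true => - (1%:R / 4%:R)
  | true, false, true, false => - (1%:R / 4%:R)
  | true, false, true, true => - (1%:R / 3%:R)
  | true, true, false, _ => 0
  | true, true, true, _ => - (1%:R / 4%:R)
  end.

Lemma gL_gt0 a b c : 0 < gL a b c.
Proof. by case: a; case: b; case: c; rewrite /gL /=; lra. Qed.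

Lemma gU_gt0 a b c : 0 < gU a b c.
Proof. by case: a; rewrite /gU /=; lra. Qed.

Lemma local_drift_gL a b c d e : local_drift gL a b c d e + hL a b c d - hL b c d e <= 0.
Proof.
by case: a; case: b; case: c; case: d; case: e;
  rewrite /local_drift /Phi_ratio /b2r /gL /hL /=; lra.
Qed.

Lemma local_drift_gU a b c d e : 0 <= local_drift gU a b c d e + hU a b c d - hU b c d e.
Proof.
by case: a; case: b; case: c; case: d; case: e;
  rewrite /local_drift /Phi_ratio /b2r /gU /hU /=; lra.
Qed.
End Certificates.

Section CirculantBounds.
Variables (R : realType) (n : nat).
Local Notation N := n.+3.+2.
Local Notation T := 'I_N.
Local Notation cfg := (config N).
Local Notation P := (@step R N (@Cir4 N) (@Cir2 N)).
Local Notation hit := (@hitA R N (@Cir4 N) (@Cir2 N)).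
Local Notation indB := (@indB R N).
Local Notation allB := (@allB N).
Local Notation rhoN := (@rho R N (@Cir4 N) (@Cir2 N)).
Let N_gt0 : (0 < N)%N := isT.
Let Cir4_deg_gt0 := @deg_Cir4_gt0 n.
Let Cir2_deg_gt0 := @deg_Cir2_gt0 n.

Lemma single_upd (v : T) : single v = upd allB v true.
Proof. by apply/ffunP => w; rewrite !ffunE; case: eqP. Qed.

Lemma Phi_single (g : bool -> bool -> bool -> R) (v : T) :
  (forall a b c, 0 < g a b c) -> g false false false = 1 ->
  Phi g (single v) = Phi_ratio g false false false false false true.
Proof.
move=> g_gt0 g0; rewrite single_upd Phi_upd // !ffunE /=.
have -> : Phi g allB = 1 by rewrite /Phi big1 // => i _; rewrite !ffunE.
exact: mul1r.
Qed.

Lemma hitA_single_le t (v : T) : (1 - (2%:R / 3%:R) ^+ N) * hit t (single v) <= 3%:R^-1.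
Proof.
pose f (x : cfg) := 1 - Phi (gU R) x.
have Phi_le1 (x : cfg) : Phi (gU R) x <= 1.
  by apply: prodr_ile1 => i _; rewrite /gU; case: ifP => _; lra.
have f_ge0 (x : cfg) : 0 <= f x by rewrite subr_ge0.
have f_sup (x : cfg) : P f x <= f x.
  rewrite (step_1B N_gt0 Cir4_deg_gt0 Cir2_deg_gt0) lerB //.
  exact: (Phi_subharmonic (gU_gt0 R) (local_drift_gU R) x).
have fA : f (allA N) = 1 - (2%:R / 3%:R) ^+ N.
  rewrite /f /Phi (eq_bigr (fun _ => 2%:R / 3%:R)) ?prodr_const ?card_ord //.
  by move=> i _; rewrite !ffunE.
rewrite -fA; apply: le_trans (hitA_le_superharmonic t (single v) f_ge0 f_sup) _.
rewrite /f Phi_single //; last exact: gU_gt0.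
by rewrite /Phi_ratio /gU /=; lra.
Qed.

Lemma step_ge_flip_BA (h : cfg -> R) (s : cfg) u : (forall x, 0 <= h x) -> s u = false ->
  (N%:R * 2)^-1 * h (upd s (u + 1) false) <= P h s.
Proof.
move=> h_ge0 su; have := @step_ge_term R N (@Cir4 N) (@Cir2 N) h s u (u + 1) h_ge0.
by rewrite su deg_Cir2 Cir2E !inE eqxx invfM => /(_ isT).
Qed.

Lemma exists_BA (s : cfg) : s != allA N -> s != allB -> exists u, ~~ s u && s (u + 1).
Proof.
move=> sA sB; apply/existsP; apply: contraNT sB => /existsPn noBA.
have [u0 su0] : exists u0, ~~ s u0.
  apply/existsP; apply: contraNT sA => /existsPn all_s.
  by apply/eqP/ffunP => w; rewrite ffunE; apply/negbNE.
have stay k : ~~ s (u0 + k%:R).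
  elim: k => [|k IH]; first by rewrite addr0.
  by have := noBA (u0 + k%:R); rewrite IH -natr1 addrA.
apply/eqP/ffunP => w; rewrite ffunE; apply/negbTE.
by have := stay (w - u0); rewrite natr_Zp addrC subrK.
Qed.

Definition numA (s : cfg) : nat := #|[set u | s u]|.

Lemma numA_flip (s : cfg) v : s v -> (numA (upd s v false) < numA s)%N.
Proof.
move=> sv; apply/proper_card/properP; split.
  by apply/fintype.subsetP => u; rewrite !inE !ffunE; case: ifP.
by exists v; rewrite !inE ?ffunE ?eqxx.
Qed.

Lemma numA_eq0 (s : cfg) : numA s = 0%N -> s = allB.
Proof.
move/eqP; rewrite cards_eq0 => /eqP noA; apply/ffunP => u; rewrite ffunE.
apply/negbTE/negP => su; have : u \in [set u | s u] by rewrite inE.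
by rewrite noA inE.
Qed.

Lemma absorbB_ge m (s : cfg) : s != allA N -> (numA s <= m)%N ->
  (N%:R * 2)^-1 ^+ m <= iter m P indB s.
Proof.
have c_ge0 : 0 <= (N%:R * 2 : R)^-1 by rewrite invr_ge0 mulr_ge0 ?ler0n.
have indB_ge0 x : 0 <= indB x by rewrite /indB; case: eqP.
elim: m s => [|m IH] s sA; first by rewrite leqn0 => /eqP /numA_eq0 ->; rewrite /= /indB eqxx.
move=> s_le; have [->|sB] := eqVneq s allB.
  rewrite (iter_step_monochrome N_gt0 Cir4_deg_gt0 Cir2_deg_gt0 _ false) -/allB /indB eqxx.
  by rewrite exprn_ile1 // invf_le1 ?mulr_gt0 ?ltr0n // -natrM ler1n.
have [u /andP[/negbTE su su1]] := exists_BA sA sB.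
have flipA : upd s (u + 1) false != allA N.
  by apply/eqP => /ffunP /(_ (u + 1)); rewrite !ffunE eqxx.
rewrite exprS /=; apply: le_trans (step_ge_flip_BA _ su); last exact: iter_step_ge0.
rewrite ler_wpM2l // IH //; rewrite -ltnS; exact: leq_trans (numA_flip su1) s_le.
Qed.

Lemma hitA_single_ge j (v : T) :
  1 - Phi_ratio (gL R) false false false false false true - (1 - (N%:R * 2)^-1 ^+ N) ^+ j
  <= hit (j * N) (single v).
Proof.
pose f (x : cfg) := 1 - Phi (gL R) x.
have c_le1 : (N%:R * 2 : R)^-1 ^+ N <= 1.
  by rewrite exprn_ile1 ?invr_ge0 ?mulr_ge0 ?ler0n // invf_le1 ?mulr_gt0 ?ltr0n // -natrM ler1n.
have absorb (s : cfg) : s != allA N -> s != allB -> (N%:R * 2)^-1 ^+ N <= iter N P indB s.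
  by move=> sA _; apply: absorbB_ge => //; rewrite -[X in (_ <= X)%N]card_ord max_card.
have f_sub (x : cfg) : f x <= P f x.
  rewrite (step_1B N_gt0 Cir4_deg_gt0 Cir2_deg_gt0) lerB //.
  exact: (Phi_superharmonic (gL_gt0 R) (local_drift_gL R) x).
have f_le (x : cfg) : f x <= 1 - indB x.
  rewrite /f /indB; case: eqP => [->|_]; last by rewrite lerB ?Phi_ge0 //; exact: gL_gt0.
  by rewrite /Phi big1 // => i _; rewrite !ffunE.
have := hitA_ge_subharmonic N_gt0 Cir4_deg_gt0 Cir2_deg_gt0 c_le1 absorb j (single v) f_sub f_le.
by rewrite /f Phi_single //; exact: gL_gt0.
Qed.

Lemma rho_Cir_le : (10 <= n)%N -> rhoN <= 335%:R / 1000%:R.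
Proof.
move=> n_ge10; apply: (rho_le N_gt0 Cir4_deg_gt0 Cir2_deg_gt0) => t v.
have small : (2%:R / 3%:R : R) ^+ N <= 1 / 400.
  apply: le_trans (_ : (2%:R / 3%:R : R) ^+ 15 <= _); last by rewrite !exprS expr0; lra.
  by apply: ler_wiXn2l; [lra | lra | lia].
have := hitA_single_le t v; have := @hitA_ge0 R N (@Cir4 N) (@Cir2 N) t (single v).
by move: small; set p := (2%:R / 3%:R) ^+ N; set h := hitA _ _ _ _ _; nra.
Qed.

Lemma rho_Cir_ge : 1 - (471%:R / 500%:R) * (121%:R / 125%:R) * (471%:R / 500%:R) <= rhoN.
Proof.
set a := 1 - (N%:R * 2 : R)^-1 ^+ N.
have a_range : 0 <= a < 1.
  rewrite /a subr_ge0 ltrBlDr ltrDl exprn_gt0 ?invr_gt0 ?mulr_gt0 ?ltr0n // andbT.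
  by rewrite exprn_ile1 ?invr_ge0 ?mulr_ge0 ?ler0n // invf_le1 ?mulr_gt0 ?ltr0n // -natrM ler1n.
apply: (le_of_geometric_gap a_range) => j.
apply: (le_rho N_gt0 Cir4_deg_gt0 Cir2_deg_gt0 (t := j * N)) => v.
by have := hitA_single_ge j v; rewrite /Phi_ratio /gL /=; lra.
Qed.
End CirculantBounds.



Local Open Scope ereal_scope.

Theorem theorem3 (R : realType) :
  let r := fun N : nat => (@rho R N (@Cir4 N) (@Cir2 N))%:E in
  ((138%:R / 1000%:R : R)%:E < limn_einf r) /\
  (limn_einf r <= limn_esup r) /\
  (limn_esup r < (34%:R / 100%:R : R)%:E).
Proof.
move=> r.
have liminf_ge : (1 - (471%:R / 500%:R) * (121%:R / 125%:R) * (471%:R / 500%:R) : R)%:E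
                 <= limn_einf r.
  apply: limn_einf_ge; exists 5%N => // k /= k_ge5.
  have [m ->] : exists m, k = m.+3.+2 by exists (k - 5)%N; lia.
  by rewrite lee_fin rho_Cir_ge.
have limsup_le : limn_esup r <= (335%:R / 1000%:R : R)%:E.
  apply: limn_esup_le; exists 15%N => // k /= k_ge15.
  have [m [-> m_ge10]] : exists m, k = m.+3.+2 /\ (10 <= m)%N by exists (k - 5)%N; lia.
  by rewrite lee_fin rho_Cir_le.
split; first by apply: lt_le_trans liminf_ge; rewrite lte_fin; lra.
split; first exact: limn_einf_sup.
by apply: le_lt_trans limsup_le _; rewrite lte_fin; lra.
Qed.
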